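(* There exist two phylogenetic networks $N_1$ and $N_2$ of class I on the label set $S=\{1,2,3,4,5\}$ (in the sense defined in the context) such that $N_1\not\cong N_2$ but $\theta_{AB}(N_1)=\theta_{AB}(N_2)$.
   Context: A DAG $N=(V,E)$ is labeled in a finite set $S$ if its leaves (nodes of out-degree 0) are bijectively labeled by $S$; leaves are identified with their labels. A node is a tree node if its in-degree is at most 1 and a hybrid node if its in-degree is greater than 1; the root is the node of in-degree 0. Two DAGs labeled in $S$ are isomorphic ($\cong$) if there is an isomorphism of directed graphs preserving leaf labels. A path $u\rightsquigarrow v$ is a sequence of nodes $u=v_0,\dots,v_k=v$ with $(v_{i-1},v_i)\in E$. For a node $u$: $C(u)$ is the set of leaves that are descendants of $u$; $A(u)\subseteq C(u)$ is the set of leaves $s$ such that every path from a root to $s$ contains $u$; $B(u)=C(u)\setminus A(u)$. For an arc $e=(u,v)$, its $AB$-weighted tripartition $\theta_{AB}(e)$ is the triple $(A(v),B(v),S\setminus C(v))$ in which every leaf $s\in A(v)\cup B(v)$ is additionally weighted by the maximum number of hybrid nodes contained in a path from $v$ to $s$ (counting $v$ and $s$ themselves). $\theta_{AB}(N)=\{\theta_{AB}(e)\mid e\in E\}$. A phylogenetic network on $S$ (in this sense) is a rooted DAG labeled in $S$ such that: (1) every node has in-degree and out-degree in $\{0,1,2\}$ and no node has in-degree equal to its out-degree; (2) if a node has two children, at least one of them is a tree node; (3a) if $u_1,u_2$ are the parents of a hybrid node, there is no path $u_1\rightsquigarrow u_2$ nor $u_2\rightsquigarrow u_1$; (3b) if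 $u_1,u_2$ are the parents of a hybrid node $u$, $v_1,v_2$ are the parents of a hybrid node $v$, and there is a path $u_1\rightsquigarrow v_1$, then there is no path $v_2\rightsquigarrow u_1$ nor $v_2\rightsquigarrow u_2$. Such a network is of class I if every hybrid node has at least one parent that is a tree node. *)

From mathcomp Require Import all_boot.
Set Implicit Arguments. Unset Strict Implicit. Unset Printing Implicit Defensive.

Definition S : finType := {x : 'I_6 | (0 < x)%N}.

Record network := Network {
  nV : finType;
  nE : rel nV;
  nlab : S -> nV
}.

Arguments nE : clear implicits.
Arguments nlab : clear implicits.

Section Defs.
Variable N : network.
Local Notation V := (nV N).
Local Notation E := (nE N).
Local Notation lab := (nlab N).

Definition indeg (v : V) : nat := #|[pred u | E u v]|.
Definition outdeg (v : V) : nat := #|[pred w | E v w]|.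
Definition tree_node (v : V) : bool := (indeg v <= 1)%N.
Definition hybrid (v : V) : bool := (1 < indeg v)%N.
Definition is_root (v : V) : bool := indeg v == 0%N.

Definition acyclic : Prop := forall u v, E u v -> ~~ connect E v u.
Definition rooted : Prop := exists r, forall v, is_root v <-> v = r.
Definition labeled_in_S : Prop :=
  injective lab /\ forall v, outdeg v = 0%N <-> exists s, lab s = v.

Definition cond1 : Prop :=
  forall v, [/\ (indeg v <= 2)%N, (outdeg v <= 2)%N & indeg v != outdeg v].
Definition cond2 : Prop :=
  forall v w1 w2, E v w1 -> E v w2 -> w1 != w2 -> tree_node w1 \/ tree_node w2.
Definition cond3a : Prop :=
  forall u u1 u2, E u1 u -> E u2 u -> u1 != u2 -> ~~ connect E u1 u2.
Definition cond3b : Prop :=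
  forall u u1 u2 v v1 v2,
    u != v ->
    E u1 u -> E u2 u -> u1 != u2 ->
    E v1 v -> E v2 v -> v1 != v2 ->
    connect E u1 v1 -> ~~ connect E v2 u1 /\ ~~ connect E v2 u2.

Definition phylogenetic_network : Prop :=
  [/\ acyclic, rooted, labeled_in_S, cond1 & [/\ cond2, cond3a & cond3b]].

Definition class_I : Prop :=
  forall v, hybrid v -> exists u, E u v /\ tree_node u.

Definition inC (u : V) (s : S) : Prop := connect E u (lab s).
Definition inA (u : V) (s : S) : Prop :=
  inC u s /\
  forall (r : V) (p : seq V), is_root r -> path E r p -> last r p = lab s ->
    u \in r :: p.
Definition inB (u : V) (s : S) : Prop := inC u s /\ ~ inA u s.

Definition hybcount (v : V) (p : seq V) : nat := count hybrid (v :: p).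
Definition is_weight (v : V) (s : S) (n : nat) : Prop :=
  (exists p, [/\ path E v p, last v p = lab s & hybcount v p = n]) /\
  (forall p, path E v p -> last v p = lab s -> (hybcount v p <= n)%N).
End Defs.

(* Equality of the AB-weighted tripartitions of arcs ending in v1 (in N1) and v2 (in N2):
   same A, same B, same S \ C, and same weights on A u B. *)
Definition same_wtrip (N1 N2 : network) (v1 : nV N1) (v2 : nV N2) : Prop :=
  forall s : S,
    [/\ inA v1 s <-> inA v2 s,
        inB v1 s <-> inB v2 s,
        ~ inC v1 s <-> ~ inC v2 s
      & inC v1 s -> forall n, is_weight v1 s n <-> is_weight v2 s n].

Definition theta_AB_eq (N1 N2 : network) : Prop :=
  (forall u1 v1 : nV N1, nE N1 u1 v1 ->
     exists u2 v2 : nV N2, nE N2 u2 v2 /\ same_wtrip v1 v2) /\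
  (forall u2 v2 : nV N2, nE N2 u2 v2 ->
     exists u1 v1 : nV N1, nE N1 u1 v1 /\ same_wtrip v1 v2).

Definition isomorphic (N1 N2 : network) : Prop :=
  exists f : nV N1 -> nV N2,
    [/\ bijective f,
        forall u v, nE N1 u v <-> nE N2 (f u) (f v)
      & forall s, f (nlab N1 s) = nlab N2 s].

From mathcomp Require Import all_boot.
Set Implicit Arguments. Unset Strict Implicit. Unset Printing Implicit Defensive.

(* N2 arises from N1 by exchanging the children 6 and 12 of the nodes 7 and 8.
   Leaf 2 then has five ancestors in N1 but four in N2, so the networks are not
   isomorphic, while every arc head of either network has the AB-weighted
   tripartition of some arc head of the other.
   For concrete finite networks all of this is decidable: quantifiers over nodes
   become [all] over an enumeration, degrees become counts, reachability becomes
   a search among paths shorter than the number of nodes, membership in A(u)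
   becomes unreachability in the graph with u removed, and in an acyclic network
   the weights are maxima over the finitely many paths. *)

Lemma foldr_maxn_eqS (c : seq nat) m :
  foldr maxn 0 c = m.+1 <-> m.+1 \in c /\ {in c, forall k, k <= m.+1}.
Proof.
have ub (r : seq nat) k : k \in r -> k <= foldr maxn 0 r.
  elim: r => [//|a r IHr]; rewrite in_cons /= leq_max.
  by case/predU1P => [->|/IHr ->]; rewrite ?leqnn ?orbT.
have max_in (r : seq nat) : foldr maxn 0 r \in 0 :: r.
  elim: r => [|a r IHr] /=; first exact: mem_head.
  case: (leqP a (foldr maxn 0 r)) => _.
    by move: IHr; rewrite !in_cons => /predU1P[-> | ->]; rewrite ?eqxx ?orbT.
  by rewrite !in_cons eqxx orbT.
split=> [max_c | [m_c ub_m]].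
  by split=> [|k /ub]; [move: (max_in c); rewrite max_c | rewrite max_c].
apply/eqP; rewrite eqn_leq ub // andbT.
by case/predU1P: (max_in c) => [-> // | /ub_m].
Qed.

Section Enumeration.
Variables (T : finType) (nodes : seq T).
Hypothesis nodesP : forall x, x \in nodes.

Lemma all_nodesP (P : pred T) : reflect (forall x, P x) (all P nodes).
Proof. by apply: (iffP allP) => [H x | H x _]; [apply: H (nodesP x) | apply: H]. Qed.

Definition parents (e : rel T) y := [seq x <- nodes | e x y].

Lemma all_parentsP (e : rel T) y (P : pred T) :
  reflect (forall x, e x y -> P x) (all P (parents e y)).
Proof.
apply: (iffP allP) => [H x exy | H x]; first by apply: H; rewrite mem_filter exy nodesP.
by rewrite mem_filter => /andP[/H].
Qed.

Fixpoint paths_from (e : rel T) n x : seq (seq T) :=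
  [::] :: if n is n'.+1 then
    [seq y :: p | y <- [seq y <- nodes | e x y], p <- paths_from e n' y]
  else [::].

Lemma mem_paths_from e n x p :
  (p \in paths_from e n x) = path e x p && (size p <= n).
Proof.
elim: n x p => [|n IHn] x [|y p] //=; rewrite in_cons //= ?in_nil ?ltn0 ?andbF //.
rewrite ltnS; apply/idP/idP => [/allpairsPdep[z [q []]] | /andP[/andP[exy ep] sz]].
  by rewrite mem_filter IHn => /andP[exz _] /andP[ezq szq] [-> ->]; rewrite exz ezq.
by apply/allpairsPdep; exists y, p; rewrite mem_filter exy nodesP IHn ep.
Qed.

Lemma size_uniq_path (x : T) (p : seq T) : uniq (x :: p) -> size p < size nodes.
Proof. by move/uniq_leq_size; apply=> y _; apply: nodesP. Qed.

Definition reach (e : rel T) x y :=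
  has (fun p => last x p == y) (paths_from e (size nodes) x).

Lemma connect_reach e x y : connect e x y = reach e x y.
Proof.
apply/connectP/hasP => [[p ep ->] | [p]].
  case: (shortenP ep) => q eq Uq _; exists q => //.
  by rewrite mem_paths_from eq ltnW ?(size_uniq_path Uq).
by rewrite mem_paths_from => /andP[ep _] /eqP <-; exists p.
Qed.

Hypothesis nodesU : uniq nodes.

Lemma card_count (P : pred T) : #|P| = count P nodes.
Proof.
rewrite cardE size_filter -enumT.
have /permP -> // : perm_eq (enum T) nodes.
by apply: uniq_perm; rewrite ?enum_uniq // => x; rewrite mem_enum nodesP.
Qed.

End Enumeration.

Section Graph.
Variables (T : finType) (e : rel T).

Definition avoiding u : rel T := [rel x y | e x y && (y != u)].

Lemma avoiding_path u x p : path (avoiding u) x p = path e x p && (u \notin p).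
Proof.
elim: p x => [|y p IHp] x //=.
by rewrite IHp in_cons negb_or [u == y]eq_sym /= -!andbA; congr (_ && _); rewrite andbCA.
Qed.

Lemma avoidingP u r t :
  (forall p, path e r p -> last r p = t -> u \in r :: p) <->
  (r == u) || ~~ connect (avoiding u) r t.
Proof.
split=> [through_u | ].
  case: eqVneq => [// | ru] /=; apply/negP => /connectP[p].
  rewrite avoiding_path => /andP[ep up] tp.
  by move: (through_u p ep (esym tp)); rewrite in_cons eq_sym (negbTE ru) (negbTE up).
move=> H p ep tp; rewrite in_cons; apply/norP => [[ur up]].
move: H; rewrite eq_sym (negbTE ur) /= => /negP; apply; apply/connectP.
by exists p; rewrite ?avoiding_path ?ep.
Qed.

Lemma acyclic_path_uniq :
  (forall u v, e u v -> ~~ connect e v u) -> forall x p, path e x p -> uniq (x :: p).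
Proof.
move=> acyc x p; elim: p x => [//|y p IHp] x /andP[exy ep].
rewrite cons_uniq IHp // andbT; apply: contra (acyc _ _ exy); exact: path_connect.
Qed.

End Graph.

Lemma connect_homo (T T' : finType) (e : rel T) (e' : rel T') (f : T -> T') :
  (forall x y, e x y -> e' (f x) (f y)) ->
  forall x y, connect e x y -> connect e' (f x) (f y).
Proof.
move=> fe x _ /connectP[p ep ->]; apply/connectP.
exists (map f p); last by rewrite last_map.
by elim: p x ep => [|y p IHp] x //= /andP[/fe -> /IHp].
Qed.

Section Network.
Variables (N : network) (nodes : seq (nV N)) (labels : seq S).
Hypotheses (nodesP : forall x, x \in nodes) (nodesU : uniq nodes).
Hypothesis labelsP : forall s, s \in labels.
Local Notation V := (nV N).
Local Notation E := (nE N).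
Local Notation lab := (nlab N).
Local Notation all_nodes := (all_nodesP nodesP).
Local Notation all_parents := (all_parentsP nodesP).
Local Notation reach := (reach nodes).
Local Notation parents := (parents nodes).

Definition indeg_seq (v : V) := count (E^~ v) nodes.
Definition outdeg_seq (v : V) := count (E v) nodes.

Lemma indegE v : indeg v = indeg_seq v. Proof. exact: card_count. Qed.
Lemma outdegE v : outdeg v = outdeg_seq v. Proof. exact: card_count. Qed.
Lemma hybridE v : hybrid v = (1 < indeg_seq v). Proof. by rewrite /hybrid indegE. Qed.
Lemma tree_nodeE v : tree_node v = (indeg_seq v <= 1).
Proof. by rewrite /tree_node indegE. Qed.

Definition acyclicb :=
  all (fun u => all (fun v => E u v ==> ~~ reach E v u) nodes) nodes.

Definition rootb r := all (fun v => (indeg_seq v == 0) == (v == r)) nodes.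

Definition labeledb :=
  all (fun v => (outdeg_seq v == 0) == has (fun s => lab s == v) labels) nodes.

Definition cond1b := all (fun v =>
  [&& indeg_seq v <= 2, outdeg_seq v <= 2 & indeg_seq v != outdeg_seq v]) nodes.

Definition cond2b := all (fun v => all (fun w1 => all (fun w2 =>
  [&& E v w1, E v w2 & w1 != w2] ==> (indeg_seq w1 <= 1) || (indeg_seq w2 <= 1))
  nodes) nodes) nodes.

Definition cond3ab := all (fun u => all (fun u1 => all (fun u2 =>
  (u1 != u2) ==> ~~ reach E u1 u2) (parents E u)) (parents E u)) nodes.

Definition cond3bb := all (fun u => all (fun u1 => all (fun u2 =>
  (u1 != u2) ==> all (fun v => (u != v) ==> all (fun v1 => all (fun v2 =>
    [&& v1 != v2 & reach E u1 v1] ==> ~~ reach E v2 u1 && ~~ reach E v2 u2)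
  (parents E v)) (parents E v)) nodes) (parents E u)) (parents E u)) nodes.

Definition class_Ib :=
  all (fun v => (1 < indeg_seq v) ==> has (fun u => indeg_seq u <= 1) (parents E v)) nodes.

Lemma acyclicP : acyclicb -> acyclic N.
Proof.
move=> /all_nodes acyc u v; move/all_nodes/(_ v): (acyc u).
by rewrite (connect_reach nodesP) => /implyP.
Qed.

Lemma rootedP r : rootb r -> rooted N.
Proof.
move=> /all_nodes root_r; exists r => v; move/eqP: (root_r v).
by rewrite /is_root indegE => ->; split=> /eqP.
Qed.

Lemma labeledP : injective lab -> labeledb -> labeled_in_S N.
Proof.
move=> lab_inj /all_nodes leaves; split=> // v; rewrite outdegE.
split=> [/eqP | [s <-]]; first by rewrite (eqP (leaves v)) => /hasP[s _ /eqP <-]; exists s.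
by apply/eqP; rewrite (eqP (leaves _)); apply/hasP; exists s; rewrite ?labelsP.
Qed.

Lemma cond1P : cond1b -> cond1 N.
Proof. by move=> /all_nodes H v; rewrite indegE outdegE; case/and3P: (H v). Qed.

Lemma cond2P : cond2b -> cond2 N.
Proof.
move=> /all_nodes H v w1 w2 e1 e2 w12; rewrite !tree_nodeE.
by move/all_nodes/(_ w1)/all_nodes/(_ w2): (H v); rewrite e1 e2 w12 => /orP.
Qed.

Lemma cond3aP : cond3ab -> cond3a N.
Proof.
move=> /all_nodes H u u1 u2 e1 e2 u12; rewrite (connect_reach nodesP).
by move/all_parents/(_ u1 e1)/all_parents/(_ u2 e2): (H u); rewrite u12.
Qed.

Lemma cond3bP : cond3bb -> cond3b N.
Proof.
move=> /all_nodes H u u1 u2 v v1 v2 uv e1 e2 u12 f1 f2 v12.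
move/all_parents/(_ u1 e1)/all_parents/(_ u2 e2): (H u); rewrite u12.
move/all_nodes/(_ v); rewrite uv => /all_parents/(_ v1 f1)/all_parents/(_ v2 f2).
by rewrite v12 -!(connect_reach nodesP) => /implyP H' /H' /andP.
Qed.

Lemma class_IP : class_Ib -> class_I N.
Proof.
move=> /all_nodes H v; rewrite hybridE => hyb_v.
move/implyP/(_ hyb_v)/hasP: (H v) => [u]; rewrite mem_filter => /andP[euv _] tree_u.
by exists u; rewrite tree_nodeE.
Qed.

Definition phylogenetic_networkb r :=
  [&& acyclicb, rootb r, labeledb, cond1b, cond2b, cond3ab & cond3bb].

Lemma phylogenetic_networkP r :
  injective lab -> phylogenetic_networkb r -> phylogenetic_network N.
Proof.
move=> lab_inj /and5P[acyc root_r leaves c1 /and3P[c2 c3a c3b]].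
split; [exact: acyclicP | exact: rootedP root_r | exact: labeledP | exact: cond1P | ].
by split; [exact: cond2P | exact: cond3aP | exact: cond3bP].
Qed.

Definition inAb u s :=
  reach E u (lab s) &&
  all (fun r => (indeg_seq r == 0) ==> (r == u) || ~~ reach (avoiding E u) r (lab s)) nodes.

Lemma inAP u s : inA u s <-> inAb u s.
Proof.
rewrite /inA /inAb /inC (connect_reach nodesP).
split=> [[-> through_u] | /andP[-> /all_nodes through_u]].
  apply/all_nodes => r; apply/implyP; rewrite -indegE -(connect_reach nodesP) => root_r.
  by apply/avoidingP => p; apply: through_u.
split=> // r p root_r; move: (through_u r); rewrite -indegE -(connect_reach nodesP).
by move=> /implyP/(_ root_r)/avoidingP; apply.
Qed.

(* One more than the largest hybrid count of a path from v to s, and 0 if there is none. *)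
Definition max_hyb v s := foldr maxn 0
  [seq (count (fun x => 1 < indeg_seq x) (v :: p)).+1
     | p <- paths_from nodes E (size nodes) v & last v p == lab s].

Lemma is_weightE : acyclic N -> forall v s n, is_weight v s n <-> max_hyb v s = n.+1.
Proof.
move=> acyc v s n.
have hybcountE p : hybcount v p = count (fun x => 1 < indeg_seq x) (v :: p).
  by apply: eq_count => x; apply: hybridE.
rewrite /max_hyb; apply: (iff_trans _ (iff_sym (foldr_maxn_eqS _ _))).
set P := [seq p <- _ | _].
have memP p : (p \in P) = path E v p && (last v p == lab s).
  rewrite mem_filter (mem_paths_from nodesP) andbC; case ep: (path E v p) => //=.
  by rewrite ltnW // (size_uniq_path nodesP (acyclic_path_uniq acyc ep)).
split=> [[[p [ep lp <-]] max_n] | [/mapP[p]]].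
  split=> [|k /mapP[q]].
    by apply/mapP; exists p; rewrite ?memP ?ep ?lp ?eqxx ?hybcountE.
  by rewrite memP => /andP[eq /eqP lq] ->; rewrite ltnS -hybcountE; apply: max_n.
rewrite memP => /andP[ep /eqP lp] [n_p] max_n; split; first by exists p; rewrite hybcountE.
move=> q eq lq; rewrite -ltnS hybcountE; apply: max_n; apply/mapP.
by exists q; rewrite ?memP ?eq ?lq ?eqxx.
Qed.

Lemma card_ancestorsE x :
  #|[pred u | connect E u x]| = count (fun u => reach E u x) nodes.
Proof.
rewrite (card_count nodesP nodesU); apply: eq_count => u.
by rewrite /= (connect_reach nodesP).
Qed.

Definition arc_targets := [seq v <- nodes | has (E^~ v) nodes].

Lemma arc_targetsP v : reflect (exists u, E u v) (v \in arc_targets).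
Proof.
rewrite mem_filter nodesP andbT.
by apply: (iffP hasP) => [[u _ euv] | [u euv]]; exists u.
Qed.

Definition wtrip_code v :=
  [seq (inAb v s, reach E v (lab s), max_hyb v s) | s <- labels].

Definition wtrip_codes := map wtrip_code arc_targets.

End Network.

Section Comparison.
Variables (N1 N2 : network) (nodes1 : seq (nV N1)) (nodes2 : seq (nV N2)).
Variable labels : seq S.
Hypotheses (nodes1P : forall x, x \in nodes1) (nodes1U : uniq nodes1).
Hypotheses (nodes2P : forall x, x \in nodes2) (nodes2U : uniq nodes2).
Hypothesis labelsP : forall s, s \in labels.

Lemma isomorphic_card_ancestors s : isomorphic N1 N2 ->
  #|[pred u | connect (nE N1) u (nlab N1 s)]| =
  #|[pred u | connect (nE N2) u (nlab N2 s)]|.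
Proof.
case=> f [[g fK gK] fE flab].
have f_arc x y : nE N1 x y -> nE N2 (f x) (f y) by move/fE.
have g_arc x y : nE N2 x y -> nE N1 (g x) (g y) by rewrite -{1}(gK x) -{1}(gK y) => /fE.
rewrite -(card_image (can_inj fK)); apply: eq_card => y.
rewrite -[y]gK (mem_image (can_inj fK)) !inE -flab.
by apply/idP/idP => [/(connect_homo f_arc) | /(connect_homo g_arc)]; rewrite ?fK.
Qed.

Lemma not_isomorphicP :
  has (fun s => count (fun u => reach nodes1 (nE N1) u (nlab N1 s)) nodes1 !=
                count (fun u => reach nodes2 (nE N2) u (nlab N2 s)) nodes2) labels ->
  ~ isomorphic N1 N2.
Proof.
case/hasP=> s _ + /(isomorphic_card_ancestors s).
by rewrite -(card_ancestorsE nodes1P nodes1U) -(card_ancestorsE nodes2P nodes2U) => /eqP.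
Qed.

Hypotheses (acyc1 : acyclic N1) (acyc2 : acyclic N2).

Lemma same_wtripP v1 v2 :
  wtrip_code nodes1 labels v1 = wtrip_code nodes2 labels v2 -> same_wtrip v1 v2.
Proof.
move/eq_in_map => same s; case: (same s (labelsP s)) => eqA eqC eqW.
have inA_iff : inA v1 s <-> inA v2 s.
  split=> [/(inAP nodes1P nodes1U) | /(inAP nodes2P nodes2U)].
    by rewrite eqA => /(inAP nodes2P nodes2U).
  by rewrite -eqA => /(inAP nodes1P nodes1U).
rewrite /inB /inC (connect_reach nodes1P) (connect_reach nodes2P) eqC.
split=> //; first by split=> -[c1 a1]; split=> // /inA_iff.
move=> _ n.
split=> [/(is_weightE nodes1P nodes1U acyc1) | /(is_weightE nodes2P nodes2U acyc2)].
  by rewrite eqW => /(is_weightE nodes2P nodes2U acyc2).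
by rewrite -eqW => /(is_weightE nodes1P nodes1U acyc1).
Qed.

Definition theta_ABb :=
  all (mem (wtrip_codes nodes2 labels)) (wtrip_codes nodes1 labels) &&
  all (mem (wtrip_codes nodes1 labels)) (wtrip_codes nodes2 labels).

Lemma theta_AB_eqP : theta_ABb -> theta_AB_eq N1 N2.
Proof.
case/andP=> /allP codes12 /allP codes21; split=> [u1 v1 e1 | u2 v2 e2].
  have : wtrip_code nodes1 labels v1 \in wtrip_codes nodes1 labels.
    by apply: map_f; apply/(arc_targetsP nodes1P); exists u1.
  case/codes12/mapP=> v2 /(arc_targetsP nodes2P)[u2 e2] same.
  by exists u2, v2; split=> //; apply: same_wtripP.
have : wtrip_code nodes2 labels v2 \in wtrip_codes nodes2 labels.
  by apply: map_f; apply/(arc_targetsP nodes2P); exists u2.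
case/codes21/mapP=> v1 /(arc_targetsP nodes1P)[u1 e1] same.
by exists u1, v1; split=> //; apply: same_wtripP (esym same).
Qed.

End Comparison.

Definition ord_seq n : seq 'I_n.+1 :=
  [seq Ordinal (ltn_pmod i (ltn0Sn n)) | i <- iota 0 n.+1].

Lemma ord_seqE n : ord_seq n = ord_enum n.+1.
Proof.
apply: (inj_map val_inj); rewrite val_ord_enum -map_comp -[RHS]map_id.
by apply/eq_in_map => i; rewrite mem_iota => /andP[_ lt_i] /=; apply: modn_small.
Qed.

Definition nodes14 : seq 'I_14 := ord_seq 13.

Lemma nodes14P x : x \in nodes14. Proof. by rewrite /nodes14 ord_seqE mem_ord_enum. Qed.
Lemma nodes14U : uniq nodes14. Proof. by rewrite /nodes14 ord_seqE ord_enum_uniq. Qed.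

Definition labels5 : seq S := pmap (@insub_eq _ _ _) (ord_seq 5).

Lemma labels5P s : s \in labels5.
Proof. by rewrite /labels5 (eq_pmap (insub_eqE _)) mem_pmap_sub ord_seqE mem_ord_enum. Qed.

Definition leaf (s : S) : 'I_14 := widen_ord (isT : 6 <= 14) (val s).

Lemma leaf_inj : injective leaf.
Proof. by move=> s t /(congr1 val) /= /val_inj /val_inj. Qed.

Definition arc_rel (arcs : seq (nat * nat)) : rel 'I_14 :=
  fun u v => (nat_of_ord u, nat_of_ord v) \in arcs.

Definition arc_network arcs := Network (arc_rel arcs) leaf.

Lemma arc_network_class_I arcs (r : 'I_14) :
  phylogenetic_networkb (N := arc_network arcs) nodes14 labels5 r ->
  class_Ib (N := arc_network arcs) nodes14 ->
  phylogenetic_network (arc_network arcs) /\ class_I (arc_network arcs).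
Proof.
move=> phylo classI; split.
  exact: (@phylogenetic_networkP (arc_network arcs) _ _ nodes14P nodes14U labels5P _
           leaf_inj phylo).
exact: (@class_IP (arc_network arcs) _ nodes14P nodes14U classI).
Qed.

Definition N1 := arc_network
  [:: (9,8); (9,11); (8,7); (8,12); (7,6); (7,13); (6,2); (6,0); (13,5); (13,0);
      (11,3); (11,12); (12,1); (0,10); (10,4); (10,1)].

Definition N2 := arc_network
  [:: (9,8); (9,11); (8,7); (8,6); (7,12); (7,13); (6,2); (6,0); (13,5); (13,0);
      (11,3); (11,12); (12,1); (0,10); (10,4); (10,1)].

Definition root9 : 'I_14 := @Ordinal 14 9 isT.

Theorem mainTheorem1 :
  exists N1 N2 : network,
    [/\ phylogenetic_network N1, phylogenetic_network N2,
        class_I N1, class_I N2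
      & ~ isomorphic N1 N2 /\ theta_AB_eq N1 N2].
Proof.
have [phylo1 classI1] : phylogenetic_network N1 /\ class_I N1.
  by apply: (arc_network_class_I (r := root9)); vm_compute.
have [phylo2 classI2] : phylogenetic_network N2 /\ class_I N2.
  by apply: (arc_network_class_I (r := root9)); vm_compute.
exists N1, N2; split=> //; split.
  apply: (@not_isomorphicP N1 N2 _ _ labels5 nodes14P nodes14U nodes14P nodes14U).
  by vm_compute.
case: phylo1 phylo2 => [acyc1 _ _ _ _] [acyc2 _ _ _ _].
apply: (@theta_AB_eqP N1 N2 _ _ _ nodes14P nodes14U nodes14P nodes14U labels5P acyc1 acyc2).
by vm_compute.
Qed.
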